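(* For any positive integer $r$ the group $H^1(\mathrm{SL}_2^+(\mathbb{Z}/2^r),(\mathbb{Z}/2^r)^2)$ (with tautological action) is annihilated by $2^{r-1}$.
   Context: For $n$ even, $\mathrm{SL}_2^+(\mathbb{Z}/n)$ is the kernel of the composite $\mathrm{SL}_2(\mathbb{Z}/n)\to\mathrm{SL}_2(\mathbb{Z}/2)\cong S_3\to\{\pm1\}$ of reduction modulo $2$ and the signature. *)

From HB Require Import structures.
From mathcomp Require Import all_boot all_order all_algebra all_fingroup.
Set Implicit Arguments. Unset Strict Implicit. Unset Printing Implicit Defensive.
Import GRing.Theory.
Local Open Scope ring_scope.

(* Reduction modulo 2 of a 2x2 matrix over Z/n (meaningful for n even). *)
Definition red2 (n : nat) (A : 'M['Z_n]_2) : 'M['Z_2]_2 :=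
  \matrix_(i, j) ((nat_of_ord (A i j))%:R : 'Z_2).

Definition nzvec := {v : 'rV['Z_2]_2 | v != 0}.

(* Signature of the permutation of the three nonzero vectors of (Z/2)^2
   induced by B (this realizes SL_2(Z/2) ~= S_3 -> {+-1});
   [true] means odd. *)
Definition sl2_sign (B : 'M['Z_2]_2) : bool :=
  if [pick s : {perm nzvec} | [forall v : nzvec, val (s v) == val v *m B]]
  is Some s then odd_perm s else false.

Definition in_SL2plus (n : nat) (A : 'M['Z_n]_2) : bool :=
  (\det A == 1) && ~~ sl2_sign (red2 A).

Definition cocycle (n : nat) (G : pred 'M['Z_n]_2) (f : 'M['Z_n]_2 -> 'cV['Z_n]_2) :=
  forall A B, G A -> G B -> f (A *m B) = f A + A *m f B.

Definition coboundary (n : nat) (G : pred 'M['Z_n]_2) (f : 'M['Z_n]_2 -> 'cV['Z_n]_2) :=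
  exists m : 'cV['Z_n]_2, forall A, G A -> f A = A *m m - m.

From mathcomp Require Import all_boot all_order all_algebra all_fingroup.
Set Implicit Arguments. Unset Strict Implicit. Unset Printing Implicit Defensive.
Import GRing.Theory.
Local Open Scope ring_scope.

(* For r >= 2 the central matrix z = -1 lies in SL_2^+(Z/2^r), so expanding
   f(zA) = f(Az) with the cocycle rule gives 2 f(A) = f(z) - A f(z); hence
   2^(r-1) f is the coboundary of -2^(r-2) f(z).  For r = 1 the group
   SL_2^+(Z/2) is {1, g, g^2} with g = [[0,1],[1,1]] and g^2 = g + 1, and every
   cocycle is the coboundary of g f(g). *)

Section Cocycles.

Variables (n : nat) (G : pred 'M['Z_n]_2) (f : 'M['Z_n]_2 -> 'cV['Z_n]_2).
Hypothesis f_cocycle : cocycle G f.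

Lemma cocycle1 : G 1%:M -> f 1%:M = 0.
Proof.
move=> G1; have := f_cocycle G1 G1; rewrite !mul1mx => f11.
by apply: (@addrI _ (f 1%:M)); rewrite addr0 -f11.
Qed.

Lemma cocycle_mulr2n_opp1 (A : 'M['Z_n]_2) : G (-1)%:M -> G A ->
  f A *+ 2 = f (-1)%:M - A *m f (-1)%:M.
Proof.
set z := (-1)%:M => Gz GA.
have fzA := f_cocycle Gz GA; have fAz := f_cocycle GA Gz.
rewrite scalar_mxC fzA mul_scalar_mx scaleN1r in fAz.
rewrite {1}(_ : f z = f A + A *m f z + f A); last by rewrite -fAz subrK.
by rewrite mulr2n [f A + _ + f A]addrAC addrK.
Qed.

Lemma coboundary_double_opp1 (k : nat) : G (-1)%:M ->
  coboundary G (fun A => f A *+ k.*2).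
Proof.
move=> Gz; exists (- f (-1)%:M *+ k) => A GA.
rewrite -mul2n mulrnA cocycle_mulr2n_opp1 //.
by rewrite raddfMn /= mulmxN !mulNrn opprK mulrnBl addrC.
Qed.

End Cocycles.

Lemma val_ZpN1 (p : nat) : (1 < p)%N -> nat_of_ord (-1 : 'Z_p) = p.-1.
Proof.
move=> p_gt1; rewrite -[in RHS](Zp_cast p_gt1) /=.
by rewrite (@modn_small 1) // subn1 /= modn_small.
Qed.

Lemma sl2_signE (B : 'M['Z_2]_2) (s : {perm nzvec}) :
  (forall v, val (s v) = val v *m B) -> sl2_sign B = odd_perm s.
Proof.
move=> sB; rewrite /sl2_sign; case: pickP => [s' /forallP s'B | no_s].
  by congr odd_perm; apply/permP => v; apply: val_inj; rewrite sB; apply/eqP.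
by have := no_s s; rewrite (introT forallP) // => v; rewrite sB.
Qed.

Lemma sl2_sign1 : sl2_sign 1%:M = false.
Proof. by rewrite (@sl2_signE _ 1) ?odd_perm1 // => v; rewrite perm1 mulmx1. Qed.

Lemma in_SL2plus_opp1 (n : nat) : (1 < n)%N -> ~~ odd n ->
  in_SL2plus ((-1)%:M : 'M['Z_n]_2).
Proof.
move=> n_gt1 n_even; rewrite /in_SL2plus det_scalar sqrrN expr1n eqxx /=.
have odd_n1 : odd n.-1 by rewrite -(prednK (ltnW n_gt1)) /= in n_even; exact: negbNE.
suff -> : red2 ((-1)%:M : 'M['Z_n]_2) = 1%:M by rewrite sl2_sign1.
apply/matrixP => i j; rewrite !mxE; case: (i == j); last by rewrite !mulr0n.
rewrite !mulr1n val_ZpN1 //; apply: val_inj.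
by rewrite /= Zp_nat /= modn2 odd_n1.
Qed.

Section Matrices2.

Variable R : nzRingType.

Definition rv2 (x y : R) : 'rV[R]_2 := \row_j (if j == 0 then x else y).

Definition mx2 (a b c d : R) : 'M[R]_2 :=
  \matrix_(i, j) if i == 0 then (if j == 0 then a else b)
                 else (if j == 0 then c else d).

Lemma mx2E (A : 'M[R]_2) : A = mx2 (A 0 0) (A 0 1) (A 1 0) (A 1 1).
Proof.
apply/matrixP => i j; rewrite !mxE.
by case: i => [[|[|]]] //= ?; case: j => [[|[|]]] //= ?; congr (A _ _); apply: val_inj.
Qed.

Lemma mul_rv2_mx2 x y a b c d :
  rv2 x y *m mx2 a b c d = rv2 (x * a + y * c) (x * b + y * d).
Proof.
apply/rowP => j; rewrite !mxE big_ord_recl big_ord1 !mxE.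
by case: j => [[|[|]]].
Qed.

Lemma mul_mx2 a b c d a' b' c' d' : mx2 a b c d *m mx2 a' b' c' d' =
  mx2 (a * a' + b * c') (a * b' + b * d') (c * a' + d * c') (c * b' + d * d').
Proof.
apply/matrixP => i j; rewrite !mxE big_ord_recl big_ord1 !mxE.
by case: i => [[|[|]]] //= ?; case: j => [[|[|]]].
Qed.

Lemma add_mx2 a b c d a' b' c' d' :
  mx2 a b c d + mx2 a' b' c' d' = mx2 (a + a') (b + b') (c + c') (d + d').
Proof.
apply/matrixP => i j; rewrite !mxE.
by case: i => [[|[|]]] //= ?; case: j => [[|[|]]].
Qed.

Lemma mx2_1 : 1%:M = mx2 1 0 0 1.
Proof.
apply/matrixP => i j; rewrite !mxE.
by case: i => [[|[|]]] //= ?; case: j => [[|[|]]].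
Qed.

Lemma rv2_neq0 x y : (x != 0) || (y != 0) -> rv2 x y != 0.
Proof.
apply: contraTT; rewrite negb_or !negbK => /eqP/rowP xy0.
by apply/andP; split; apply/eqP; [have := xy0 0 | have := xy0 1]; rewrite !mxE.
Qed.

End Matrices2.

Lemma det_mx2 (R : comNzRingType) (a b c d : R) : \det (mx2 a b c d) = a * d - b * c.
Proof.
rewrite (expand_det_row _ 0) big_ord_recl big_ord1 /cofactor !det_mx11 !mxE /=.
by rewrite expr0 expr1 !mul1r mulN1r mulrN.
Qed.

Lemma Z2_cases (x : 'Z_2) : x = 0 \/ x = 1.
Proof. by case: x => [[|[|]]] //= ?; [left | right]; apply: val_inj. Qed.

Lemma oppZ2 m n (v : 'M['Z_2]_(m, n)) : - v = v.
Proof. by apply/matrixP => i j; rewrite !mxE; case: (Z2_cases (v i j)) => ->; apply: val_inj. Qed.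

Lemma red2_Z2 (A : 'M['Z_2]_2) : red2 A = A.
Proof. by apply/matrixP => i j; rewrite !mxE natr_Zp. Qed.

Definition nz10 : nzvec := exist _ (rv2 1 0) (@rv2_neq0 'Z_2 1 0 isT).
Definition nz01 : nzvec := exist _ (rv2 0 1) (@rv2_neq0 'Z_2 0 1 isT).
Definition nz11 : nzvec := exist _ (rv2 1 1) (@rv2_neq0 'Z_2 1 1 isT).

Lemma nzvec_uniq : uniq [:: nz10; nz01; nz11].
Proof. by apply: (@map_uniq _ _ (fun v : nzvec => (val v 0 0, val v 0 1))); rewrite /= !mxE. Qed.

Lemma card_nzvec : #|{: nzvec}| = 3.
Proof. by rewrite card_sig cardC1 card_mx card_ord. Qed.

Lemma nzvec_other (x y z v : nzvec) : uniq [:: x; y; z] -> v != x -> v != y -> v = z.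
Proof.
move=> xyz vx vy; apply/eqP/negPn/negP => vz.
have /card_uniqP s_card : uniq [:: v; x; y; z].
  by rewrite cons_uniq xyz andbT !inE !negb_or vx vy vz.
by have := max_card (mem [:: v; x; y; z]); rewrite s_card card_nzvec.
Qed.

Lemma sl2_sign_swap (B : 'M['Z_2]_2) (x y z : nzvec) : uniq [:: x; y; z] ->
  val x *m B = val y -> val y *m B = val x -> val z *m B = val z -> sl2_sign B.
Proof.
move=> xyz Bx By Bz; have := xyz; rewrite /= !inE !negb_or andbT => /andP[/andP[xy _] _].
rewrite (@sl2_signE _ (tperm x y)) ?odd_tperm // => v.
case: tpermP => [-> | -> | /eqP vx /eqP vy]; first by rewrite Bx.
  by rewrite By.
by rewrite (nzvec_other xyz vx vy).
Qed.

Lemma sl2_sign_cycle (B : 'M['Z_2]_2) (x y z : nzvec) : uniq [:: x; y; z] ->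
  val x *m B = val y -> val y *m B = val z -> val z *m B = val x -> sl2_sign B = false.
Proof.
move=> xyz Bx By Bz; have := xyz; rewrite /= !inE !negb_or andbT => /andP[/andP[xy xz] yz].
rewrite (@sl2_signE _ (tperm x y * tperm x z)) ?odd_permM ?odd_tperm ?xy ?xz // => v.
rewrite permM; have [-> | vx] := eqVneq v x; first by rewrite tpermL (tpermD xy) // eq_sym.
have [-> | vy] := eqVneq v y; first by rewrite tpermR tpermL.
by rewrite (nzvec_other xyz vx vy) (tpermD xz yz) tpermR.
Qed.

Lemma sl2_sign_mx2_0110 : sl2_sign (mx2 0 1 1 0).
Proof.
by apply: (sl2_sign_swap nzvec_uniq); rewrite /= mul_rv2_mx2; congr rv2; apply: val_inj.
Qed.

Lemma sl2_sign_mx2_1101 : sl2_sign (mx2 1 1 0 1).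
Proof.
apply: (@sl2_sign_swap _ nz11 nz10 nz01); first by rewrite -(rot_uniq 1); exact: nzvec_uniq.
all: by rewrite /= mul_rv2_mx2; congr rv2; apply: val_inj.
Qed.

Lemma sl2_sign_mx2_1011 : sl2_sign (mx2 1 0 1 1).
Proof.
apply: (@sl2_sign_swap _ nz01 nz11 nz10); first by rewrite -(rot_uniq 2); exact: nzvec_uniq.
all: by rewrite /= mul_rv2_mx2; congr rv2; apply: val_inj.
Qed.

Definition g3 : 'M['Z_2]_2 := mx2 0 1 1 1.

Lemma sl2_sign_g3 : sl2_sign g3 = false.
Proof.
by apply: (sl2_sign_cycle nzvec_uniq); rewrite /= mul_rv2_mx2; congr rv2; apply: val_inj.
Qed.

Lemma g3_add1 : g3 + 1%:M = mx2 1 1 1 0.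
Proof. by rewrite mx2_1 add_mx2; congr mx2; apply: val_inj. Qed.

Lemma g3_sq : g3 *m g3 = g3 + 1%:M.
Proof. by rewrite g3_add1 mul_mx2; congr mx2; apply: val_inj. Qed.

Lemma g3_cube : g3 *m g3 *m g3 = 1%:M.
Proof. by rewrite g3_sq g3_add1 mul_mx2 mx2_1; congr mx2; apply: val_inj. Qed.

Lemma SL2plus_Z2P (A : 'M['Z_2]_2) :
  in_SL2plus A -> [\/ A = 1%:M, A = g3 | A = g3 *m g3].
Proof.
rewrite g3_sq g3_add1 mx2_1 /in_SL2plus red2_Z2 [A]mx2E det_mx2.
case: (Z2_cases (A 0 0)) => ->; case: (Z2_cases (A 0 1)) => ->;
case: (Z2_cases (A 1 0)) => ->; case: (Z2_cases (A 1 1)) => ->;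
by rewrite ?sl2_sign_mx2_0110 ?sl2_sign_mx2_1101 ?sl2_sign_mx2_1011 ?andbF //; constructor.
Qed.

Lemma SL2plus_Z2_coboundary (f : 'M['Z_2]_2 -> 'cV['Z_2]_2) :
  cocycle (@in_SL2plus 2) f -> coboundary (@in_SL2plus 2) f.
Proof.
move=> f_cocycle.
have G1 : in_SL2plus (1%:M : 'M['Z_2]_2).
  by rewrite /in_SL2plus red2_Z2 sl2_sign1 det1 eqxx.
have Gg3 : in_SL2plus g3 by rewrite /in_SL2plus red2_Z2 sl2_sign_g3 det_mx2.
exists (g3 *m f g3) => A /SL2plus_Z2P[-> | -> | ->].
- by rewrite mul1mx subrr (cocycle1 f_cocycle).
- by rewrite mulmxA g3_sq mulmxDl mul1mx addrC addKr.
- by rewrite f_cocycle // mulmxA g3_cube mul1mx oppZ2.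
Qed.

Theorem lemma4p6 (r : nat) (hr : (0 < r)%N)
  (f : 'M['Z_(2 ^ r)]_2 -> 'cV['Z_(2 ^ r)]_2) :
  cocycle (@in_SL2plus (2 ^ r)) f ->
  coboundary (@in_SL2plus (2 ^ r)) (fun A => f A *+ (2 ^ r.-1)).
Proof.
case: r hr f => [// | [| r]] _ f f_cocycle.
  by have [m fm] := SL2plus_Z2_coboundary f_cocycle; exists m.
have -> : (2 ^ r.+2.-1 = (2 ^ r).*2)%N by rewrite expnS mul2n.
apply: (coboundary_double_opp1 f_cocycle (2 ^ r)%N).
by apply: (@in_SL2plus_opp1 (2 ^ r.+2)); rewrite ?oddX // -{1}(expn0 2) ltn_exp2l.
Qed.
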